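(* Let $N, B$ be positive integers with $B$ dividing $N$, and $\lambda>0$. Consider all assignment vectors $\bar N=(N_1,\dots,N_B)$ of positive integers with $\sum_{i=1}^B N_i = N$. For each, let $T_1,\dots,T_B$ be independent with $T_i\sim \mathrm{Exp}(N_i\lambda)$ and $T(\bar N)=\max(T_1,\dots,T_B)$. Then the balanced assignment $\bar N_b = (N/B,\dots,N/B)$ minimizes $\mathbb{E}[T(\bar N)]$ over all such assignments, i.e. $\mathbb{E}[T(\bar N)] \ge \mathbb{E}[T(\bar N_b)]$ for every such $\bar N$.
   Context: Interpretation: a data set is split into $B$ disjoint batches, batch $i$ is replicated on $N_i$ of the $N$ workers (each worker hosts exactly one batch); worker service times are i.i.d. $\mathrm{Exp}(\lambda)$; batch $i$ is recovered when the fastest of its $N_i$ workers finishes, and the overall result is available when all batches are recovered, at time $T(\bar N)$. *)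

From Stdlib Require Import Reals Lra List.
Open Scope R_scope.

Definition exp_cdf (rate t : R) : R := 1 - exp (- rate * t).

(* CDF of T(Nbar) = max_i T_i with T_i ~ Exp(N_i * lambda) independent:
   P(T <= t) = prod_i P(T_i <= t). *)
Definition max_exp_cdf (lam : R) (Nbar : list nat) (t : R) : R :=
  fold_right (fun n acc => exp_cdf (INR n * lam) t * acc) 1 Nbar.

Definition improper_integral_0_infty (f : R -> R) (l : R) : Prop :=
  forall eps : R, eps > 0 ->
    exists M : R, forall b : R, b >= M -> b >= 0 /\
      exists pr : Riemann_integrable f 0 b, Rabs (RiemannInt pr - l) < eps.

(* E[T(Nbar)] = l, via E[T] = int_0^oo P(T > t) dt for a nonnegative T. *)
Definition expected_max_exp (lam : R) (Nbar : list nat) (l : R) : Prop :=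
  improper_integral_0_infty (fun t => 1 - max_exp_cdf lam Nbar t) l.

Definition assignment (N B : nat) (Nbar : list nat) : Prop :=
  length Nbar = B /\ Forall (fun n => (0 < n)%nat) Nbar /\ fold_right Nat.add 0%nat Nbar = N.

Definition balanced (N B : nat) : list nat := repeat (N / B)%nat B.

(** With [x = exp (- lam * t)], independence gives [P (T <= t) = prod_i (1 - x ^ N_i)].
    The sequence [n |-> 1 - x ^ n] is log-concave, so it lies below the geometric
    "tangent" [a_k * r ^ (n - k)] through [a_k] with ratio [r = a_(k+1) / a_k]; multiplying
    these bounds over an assignment whose entries sum to [B * k] gives
    [prod_i (1 - x ^ N_i) <= (1 - x ^ k) ^ B].  Hence the survival function of the balanced
    assignment is pointwise the smallest, and so is its integral [E T].  All these
    integrals converge because the survival function is at most [B * exp (- lam * t)]. *)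
From Stdlib Require Import Reals Lra Lia List Arith Classical.
From Coquelicot Require Import Coquelicot.
Open Scope R_scope.

Lemma exp_INR_mul (n : nat) (y : R) : exp (INR n * y) = exp y ^ n.
Proof.
  induction n as [|n IH].
  - simpl; rewrite Rmult_0_l; apply exp_0.
  - rewrite S_INR, Rmult_plus_distr_r, exp_plus, IH, Rmult_1_l; simpl; ring.
Qed.

Lemma pow_unit_interval (x : R) (n : nat) : 0 <= x <= 1 -> 0 <= x ^ n <= 1.
Proof.
  intros Hx; induction n as [|n IH]; simpl; [lra|].
  split; [apply Rmult_le_pos; lra | nra].
Qed.

Lemma pow_le_pow_le1 (x : R) (m p : nat) : 0 <= x <= 1 -> (m <= p)%nat -> x ^ p <= x ^ m.
Proof.
  intros Hx Hmp. replace p with (m + (p - m))%nat by lia. rewrite pow_add.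
  pose proof (pow_unit_interval x m Hx). pose proof (pow_unit_interval x (p - m) Hx). nra.
Qed.

Definition prod_map (a : nat -> R) (l : list nat) : R :=
  fold_right (fun n acc => a n * acc) 1 l.

Lemma prod_map_ge0 (a : nat -> R) (l : list nat) :
  (forall n, 0 <= a n) -> 0 <= prod_map a l.
Proof. intros Ha; induction l; simpl; [lra|]. apply Rmult_le_pos; auto. Qed.

Lemma prod_map_repeat (a : nat -> R) (k B : nat) : prod_map a (repeat k B) = a k ^ B.
Proof. induction B as [|B IH]; simpl; [|rewrite IH]; reflexivity. Qed.

Section LogConcave.

Variable a : nat -> R.
Hypothesis a_ge0 : forall n, 0 <= a n.
Hypothesis a_log_concave : forall m p, (m <= p)%nat -> a (S p) * a m <= a (S m) * a p.

Variable k : nat.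
Hypothesis ak_gt0 : 0 < a k.
Hypothesis aSk_gt0 : 0 < a (S k).

Let r := a (S k) / a k.

Let r_gt0 : 0 < r.
Proof. unfold r; apply Rdiv_lt_0_compat; assumption. Qed.

Lemma log_concave_step_le (m : nat) : (k <= m)%nat -> a (S m) <= r * a m.
Proof.
  intros Hkm. pose proof (a_log_concave k m Hkm).
  apply (Rmult_le_reg_r (a k)); [assumption|].
  unfold r; field_simplify; lra.
Qed.

Lemma log_concave_step_ge (m : nat) : (m <= k)%nat -> r * a m <= a (S m).
Proof.
  intros Hmk. pose proof (a_log_concave m k Hmk).
  apply (Rmult_le_reg_r (a k)); [assumption|].
  unfold r; field_simplify; lra.
Qed.

Lemma log_concave_tangent (n : nat) : a n * r ^ k <= a k * r ^ n.
Proof.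
  pose proof r_gt0 as Hr.
  destruct (le_lt_dec k n) as [Hkn|Hnk].
  - assert (Hup : forall j, a (k + j)%nat <= a k * r ^ j).
    { induction j as [|j IH].
      - rewrite Nat.add_0_r; simpl; lra.
      - rewrite Nat.add_succ_r.
        eapply Rle_trans; [apply log_concave_step_le; lia|]. simpl.
        pose proof (a_ge0 (k + j)). nra. }
    pose proof (Hup (n - k)%nat) as H.
    replace (k + (n - k))%nat with n in H by lia.
    replace n with ((n - k) + k)%nat at 2 by lia. rewrite pow_add.
    pose proof (pow_lt r k Hr). nra.
  - assert (Hdown : forall j, (n + j <= k)%nat -> a n * r ^ j <= a (n + j)%nat).
    { induction j as [|j IH]; intros Hj.
      - rewrite Nat.add_0_r; simpl; lra.
      - rewrite Nat.add_succ_r.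
        eapply Rle_trans; [|apply log_concave_step_ge; lia]. simpl.
        specialize (IH ltac:(lia)). nra. }
    replace k with ((k - n) + n)%nat at 1 by lia. rewrite pow_add.
    specialize (Hdown (k - n)%nat ltac:(lia)).
    replace (n + (k - n))%nat with k in Hdown by lia.
    pose proof (pow_lt r n Hr). nra.
Qed.

Lemma prod_map_tangent (l : list nat) :
  prod_map a l * r ^ (k * length l) <= a k ^ length l * r ^ list_sum l.
Proof.
  pose proof r_gt0 as Hr.
  induction l as [|n l IH]; simpl.
  - rewrite Nat.mul_0_r; simpl; lra.
  - rewrite Nat.mul_succ_r, !pow_add.
    pose proof (prod_map_ge0 a l a_ge0).
    pose proof (pow_lt r (k * length l) Hr). pose proof (pow_lt r k Hr).
    pose proof (log_concave_tangent n) as Hn.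
    assert (0 <= a n * r ^ k) by (apply Rmult_le_pos; [apply a_ge0 | lra]).
    apply (Rle_trans _ ((a n * r ^ k) * (prod_map a l * r ^ (k * length l)))); [right; ring|].
    apply (Rle_trans _ ((a k * r ^ n) * (a k ^ length l * r ^ list_sum l))); [|right; ring].
    apply Rmult_le_compat; [assumption | apply Rmult_le_pos; lra | assumption | assumption].
Qed.

Lemma prod_map_le_balanced (l : list nat) :
  list_sum l = (k * length l)%nat -> prod_map a l <= a k ^ length l.
Proof.
  intros Hsum. pose proof (prod_map_tangent l) as H. rewrite Hsum in H.
  apply (Rmult_le_reg_r (r ^ (k * length l))); [apply pow_lt, r_gt0 | exact H].
Qed.

End LogConcave.

Lemma one_sub_pow_log_concave (x : R) (m p : nat) : 0 <= x <= 1 -> (m <= p)%nat ->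
  (1 - x ^ S p) * (1 - x ^ m) <= (1 - x ^ S m) * (1 - x ^ p).
Proof.
  intros Hx Hmp. simpl.
  pose proof (pow_le_pow_le1 x m p Hx Hmp).
  pose proof (pow_unit_interval x m Hx). pose proof (pow_unit_interval x p Hx).
  assert (0 <= (x ^ m - x ^ p) * (1 - x)) by (apply Rmult_le_pos; lra).
  nra.
Qed.

Lemma prod_one_sub_pow_le_balanced (x : R) (k : nat) (l : list nat) :
  0 < x < 1 -> (0 < k)%nat -> list_sum l = (k * length l)%nat ->
  prod_map (fun n => 1 - x ^ n) l <= (1 - x ^ k) ^ length l.
Proof.
  intros Hx Hk. apply prod_map_le_balanced.
  - intros n. pose proof (pow_unit_interval x n ltac:(lra)). lra.
  - intros m p. apply one_sub_pow_log_concave; lra.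
  - pose proof (pow_lt_1_compat x k ltac:(lra) Hk). lra.
  - pose proof (pow_lt_1_compat x (S k) ltac:(lra) ltac:(lia)). lra.
Qed.

Lemma one_sub_prod_one_sub_pow_le (x : R) (l : list nat) :
  0 <= x <= 1 -> List.Forall (fun n => (0 < n)%nat) l ->
  0 <= prod_map (fun n => 1 - x ^ n) l <= 1 /\
  1 - prod_map (fun n => 1 - x ^ n) l <= INR (length l) * x.
Proof.
  intros Hx Hl; induction Hl as [|n l Hn Hl IH]; [simpl; lra|].
  destruct IH as [[H0 H1] H2].
  change (prod_map _ (n :: l)) with ((1 - x ^ n) * prod_map (fun n => 1 - x ^ n) l).
  change (length (n :: l)) with (S (length l)).
  pose proof (pow_unit_interval x n Hx).
  assert (x ^ n <= x) by (rewrite <- (pow_1 x) at 2; apply pow_le_pow_le1; [lra | lia]).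
  rewrite S_INR. split; [split|]; nra.
Qed.

Lemma max_exp_cdf_prod (lam : R) (l : list nat) (t : R) :
  max_exp_cdf lam l t = prod_map (fun n => 1 - exp (- lam * t) ^ n) l.
Proof.
  induction l as [|n l IH]; simpl; [reflexivity|].
  rewrite IH. unfold exp_cdf.
  replace (- (INR n * lam) * t) with (INR n * (- lam * t)) by ring.
  now rewrite exp_INR_mul.
Qed.

Lemma exp_neg_unit_interval (lam t : R) : 0 < lam -> 0 < t -> 0 < exp (- lam * t) < 1.
Proof.
  intros Hlam Ht. split; [apply exp_pos|].
  rewrite <- exp_0. apply exp_increasing. nra.
Qed.

Lemma max_exp_survival_bound (lam : R) (l : list nat) (t : R) :
  0 < lam -> 0 <= t -> List.Forall (fun n => (0 < n)%nat) l ->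
  0 <= 1 - max_exp_cdf lam l t <= INR (length l) * exp (- lam * t).
Proof.
  intros Hlam Ht Hl. rewrite max_exp_cdf_prod.
  assert (Hx : 0 <= exp (- lam * t) <= 1).
  { destruct (Rle_lt_or_eq_dec 0 t Ht) as [Ht0 | <-].
    - pose proof (exp_neg_unit_interval lam t Hlam Ht0); lra.
    - rewrite Rmult_0_r, exp_0; lra. }
  pose proof (one_sub_prod_one_sub_pow_le _ l Hx Hl). lra.
Qed.

Lemma max_exp_survival_continuous (lam : R) (l : list nat) (t : R) :
  continuous (fun t => 1 - max_exp_cdf lam l t) t.
Proof.
  apply (@continuous_minus R_UniformSpace R_AbsRing R_NormedModule (fun _ => 1)).
  { apply continuous_const. }
  induction l as [|n l IH]; simpl.
  - apply continuous_const.
  - apply (continuous_mult (exp_cdf (INR n * lam)) (max_exp_cdf lam l)); [|exact IH].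
    apply (@ex_derive_continuous R_AbsRing R_NormedModule).
    unfold exp_cdf. auto_derive. auto.
Qed.

Lemma RInt_exp_decay_le (lam C b : R) : 0 < lam -> 0 <= C -> 0 <= b ->
  RInt (fun t => C * exp (- lam * t)) 0 b <= C / lam.
Proof.
  intros Hlam HC Hb.
  set (F := fun t => - C / lam * exp (- lam * t)).
  assert (HF : is_RInt (fun t => C * exp (- lam * t)) 0 b (minus (F b) (F 0))).
  { apply (@is_RInt_derive R_CompleteNormedModule F).
    - intros x _. unfold F. auto_derive; [exact I|]. field. lra.
    - intros x _. apply (@ex_derive_continuous R_AbsRing R_NormedModule).
      auto_derive. exact I. }
  rewrite (is_RInt_unique _ _ _ _ HF).
  unfold F, minus, plus, opp; simpl.
  rewrite Rmult_0_r, exp_0.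
  pose proof (exp_pos (- lam * b)).
  assert (0 <= C / lam) by (apply Rdiv_le_0_compat; lra).
  replace (- C / lam * exp (- lam * b) + - (- C / lam * 1))
    with (C / lam - C / lam * exp (- lam * b)) by (unfold Rdiv; ring).
  nra.
Qed.

Lemma improper_integral_of_bounded (g : R -> R) (M : R) :
  (forall t, continuous g t) -> (forall t, 0 <= t -> 0 <= g t) ->
  (forall b, 0 <= b -> RInt g 0 b <= M) ->
  exists l, improper_integral_0_infty g l.
Proof.
  intros Hc Hg HM.
  assert (Hex : forall a b, ex_RInt g a b)
    by (intros; apply (@ex_RInt_continuous R_CompleteNormedModule); auto).
  assert (Hmono : forall b1 b2, 0 <= b1 <= b2 -> RInt g 0 b1 <= RInt g 0 b2).
  { intros b1 b2 Hb.
    rewrite <- (@RInt_Chasles R_CompleteNormedModule g 0 b1 b2) by auto.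
    pose proof (RInt_ge_0 g b1 b2 ltac:(lra) (Hex _ _) ltac:(intros x Hx; apply Hg; lra)).
    simpl; unfold plus; simpl; lra. }
  set (E := fun y => exists b, 0 <= b /\ y = RInt g 0 b).
  assert (HE_bound : bound E) by (exists M; intros y [b [Hb ->]]; auto).
  assert (HE_inhab : exists y, E y) by (exists (RInt g 0 0), 0; split; [lra | auto]).
  destruct (completeness E HE_bound HE_inhab) as [l [Hub Hlub]].
  exists l. intros eps Heps.
  assert (Happrox : exists b0, 0 <= b0 /\ l - eps < RInt g 0 b0).
  { apply not_all_not_ex. intros Hn.
    enough (l <= l - eps) by lra.
    apply Hlub. intros y [b [Hb ->]].
    apply Rnot_lt_le. intros Hlt. apply (Hn b). split; assumption. }
  destruct Happrox as [b0 [Hb0 Hl]].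
  exists b0. intros b Hb. split; [lra|].
  exists (ex_RInt_Reals_0 g 0 b (Hex 0 b)). rewrite <- RInt_Reals.
  assert (RInt g 0 b <= l) by (apply Hub; exists b; split; [lra | reflexivity]).
  pose proof (Hmono b0 b ltac:(lra)).
  apply Rabs_def1; lra.
Qed.

Lemma improper_integral_le (g1 g2 : R -> R) (l1 l2 : R) :
  (forall t, 0 < t -> g1 t <= g2 t) ->
  improper_integral_0_infty g1 l1 -> improper_integral_0_infty g2 l2 -> l1 <= l2.
Proof.
  intros Hle H1 H2. apply Rnot_lt_le. intros Hlt.
  set (eps := (l1 - l2) / 2).
  assert (Heps : eps > 0) by (unfold eps; lra).
  destruct (H1 eps Heps) as [M1 HM1]. destruct (H2 eps Heps) as [M2 HM2].
  set (b := Rmax M1 M2).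
  destruct (HM1 b (Rle_ge _ _ (Rmax_l M1 M2))) as [Hb [pr1 Hp1]].
  destruct (HM2 b (Rle_ge _ _ (Rmax_r M1 M2))) as [_ [pr2 Hp2]].
  rewrite <- RInt_Reals in Hp1, Hp2.
  assert (RInt g1 0 b <= RInt g2 0 b).
  { apply RInt_le; [lra | apply ex_RInt_Reals_1; auto | apply ex_RInt_Reals_1; auto |].
    intros x Hx; apply Hle; lra. }
  apply Rabs_def2 in Hp1. apply Rabs_def2 in Hp2. unfold eps in *. lra.
Qed.

Lemma expected_max_exp_exists (lam : R) (l : list nat) :
  0 < lam -> List.Forall (fun n => (0 < n)%nat) l -> exists v, expected_max_exp lam l v.
Proof.
  intros Hlam Hl.
  apply (improper_integral_of_bounded _ (INR (length l) / lam)).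
  - apply max_exp_survival_continuous.
  - intros t Ht. apply (max_exp_survival_bound lam l t Hlam Ht Hl).
  - intros b Hb.
    eapply Rle_trans; [|apply RInt_exp_decay_le; [assumption | apply pos_INR | exact Hb]].
    apply RInt_le; [assumption | apply (@ex_RInt_continuous R_CompleteNormedModule) .. |].
    + intros t _. apply max_exp_survival_continuous.
    + intros t _. apply (@ex_derive_continuous R_AbsRing R_NormedModule).
      auto_derive. exact I.
    + intros t Ht. apply (max_exp_survival_bound lam l t Hlam ltac:(lra) Hl).
Qed.

Theorem theorem1 (N B : nat) (lam : R)
  (hN : (0 < N)%nat) (hB : (0 < B)%nat) (hdiv : Nat.divide B N) (hlam : 0 < lam) :
  (exists lb, expected_max_exp lam (balanced N B) lb) /\
  forall Nbar : list nat, assignment N B Nbar ->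
    (exists l, expected_max_exp lam Nbar l) /\
    forall l lb, expected_max_exp lam Nbar l ->
      expected_max_exp lam (balanced N B) lb -> lb <= l.
Proof.
  destruct hdiv as [k ->].
  assert (Hk : ((k * B) / B = k)%nat) by (apply Nat.div_mul; lia).
  assert (Hk0 : (0 < k)%nat) by (destruct k; lia).
  unfold balanced; rewrite Hk.
  split.
  { apply expected_max_exp_exists; [assumption|]. apply List.Forall_forall.
    intros n Hn. apply repeat_spec in Hn. lia. }
  intros Nbar [Hlen [Hpos Hsum]].
  split; [apply expected_max_exp_exists; assumption|].
  intros l lb Hl Hlb.
  eapply improper_integral_le; [|exact Hlb | exact Hl].
  intros t Ht; cbv beta. rewrite !max_exp_cdf_prod, prod_map_repeat, <- Hlen.
  apply Rplus_le_compat_l, Ropp_le_contravar, prod_one_sub_pow_le_balanced.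
  - apply exp_neg_unit_interval; assumption.
  - assumption.
  - change (list_sum Nbar = (k * B)%nat) in Hsum. lia.
Qed.
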